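(* Let $3\le h\le n-1$. The distance characteristic polynomial of $K^{h}_{n}$ is $$P_D(\lambda)=(\lambda+1)^{h-2}(\lambda+2)^{n-h-1}\bigl[\lambda^{3}+(h+4-2n)\lambda^{2}+(5-2h-2nh+2h^{2}-n)\lambda-nh+h^{2}-2h+2\bigr].$$ Moreover, if $\lambda_1\ge\lambda_2\ge\cdots\ge\lambda_n$ is the distance spectrum of $K^{h}_{n}$, then $\lambda_1>0$, $-1<\lambda_2<-\frac12$, $\lambda_3=-1$, $\lambda_{n-1}\in\{-1,-2\}$ and $\lambda_n<-2$.
   Context: For a connected graph $G$, the distance matrix $D(G)$ has as $(i,j)$-entry the distance between the $i$-th and $j$-th vertices; the distance characteristic polynomial is $P_D(\lambda)=\det(\lambda I-D(G))$ and the distance spectrum consists of the eigenvalues of $D(G)$. $K^{h}_{n}$ denotes the graph on $n$ vertices obtained from the complete graph $K_h$ by attaching $n-h$ pendant edges to one vertex of $K_h$. *)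

From HB Require Import structures.
From mathcomp Require Import all_boot all_order all_algebra.
Set Implicit Arguments. Unset Strict Implicit. Unset Printing Implicit Defensive.
Import Order.TTheory GRing.Theory Num.Theory.
Local Open Scope ring_scope.

(* A (simple) graph on a finite vertex type T is given by its adjacency
   relation e (symmetric, irreflexive). *)

Definition walk_of_length (T : finType) (e : rel T) (k : nat) (x y : T) : bool :=
  [exists p : k.-tuple T, path e x p && (last x p == y)].

(* Graph distance: the least k such that a walk of length k from x to y exists
   (searched among k < #|T|, which suffices for any pair of connected vertices,
   since a shortest walk is a path with at most #|T|-1 edges). *)
Definition gdist (T : finType) (e : rel T) (x y : T) : nat :=
  find (fun k => walk_of_length e k x y) (iota 0 #|T|).

Definition dist_matrix (R : nzRingType) (n : nat) (e : rel 'I_n) : 'M[R]_n :=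
  \matrix_(i, j) (gdist e i j)%:R.

(* K^h_n on vertex set {0,...,n-1}: vertices 0,...,h-1 form K_h, and the
   vertices h,...,n-1 are pendant vertices attached to vertex 0. *)
Definition Khn_adj (n h : nat) : rel 'I_n :=
  fun i j => (i != j) &&
    [|| ((i < h)%N && (j < h)%N),
        ((nat_of_ord i == 0%N) && (h <= j)%N)
      | ((nat_of_ord j == 0%N) && (h <= i)%N)].

Arguments dist_matrix R n e : clear implicits.
Arguments Khn_adj n h : clear implicits.

(* Distances in K^h_n are 0, 1 or 2 and depend only on the classes of the two
   vertices: the vertex carrying the pendant edges, the h - 1 other vertices of
   K_h, and the n - h pendant vertices.  Hence for x > 0 the matrix x I - D is
   a positive diagonal matrix plus U C U^T, with U the n x 3 class indicator
   matrix, and Sylvester's identity det (I + A B) = det (I + B A) reduces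
   det (x I - D) to a 3 x 3 determinant; polynomials agreeing on all x > 0 are
   equal.  The remaining monic cubic is positive at -2 and -1 and negative at
   -1/2 and 0, so it has one root in each of (-oo, -2), (-1, -1/2), (0, +oo);
   the factorisation then determines the sorted spectrum. *)

From HB Require Import structures.
From mathcomp Require Import all_boot all_order all_algebra.
From mathcomp Require Import ring lra zify.
From mathcomp.real_closed Require Import polyrcf.
Import Order.TTheory GRing.Theory Num.Theory.
Set Implicit Arguments. Unset Strict Implicit. Unset Printing Implicit Defensive.
Local Open Scope ring_scope.

Section GraphDistance.
Variables (T : finType) (e : rel T).

Lemma walk_of_length0 x y : walk_of_length e 0 x y = (x == y).
Proof.
apply/existsP/idP => [[p]|/eqP ->]; first by rewrite (tuple0 p).
by exists [tuple]; rewrite /= eqxx.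
Qed.

Lemma walk_of_length1 x y : walk_of_length e 1 x y = e x y.
Proof.
apply/existsP/idP => [[p]|exy]; last by exists [tuple y]; rewrite /= exy eqxx.
by case/tupleP: p => z t; rewrite (tuple0 t) /= andbT => /andP[exz /eqP <-].
Qed.

Lemma walk_of_length2 x y z : e x z -> e z y -> walk_of_length e 2 x y.
Proof. by move=> exz ezy; apply/existsP; exists [tuple z; y]; rewrite /= exz ezy eqxx. Qed.

Lemma gdist_diam2 x y : (2 < #|T|)%N ->
  (x != y -> ~~ e x y -> exists z, e x z && e z y) ->
  gdist e x y = if x == y then 0%N else if e x y then 1%N else 2%N.
Proof.
rewrite /gdist => + common_nbr; case: #|T| => [|[|[|m]]] // _ /=.
rewrite walk_of_length0 walk_of_length1; have [//|xy] := eqVneq x y.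
case exy: (e x y) => //; have [z /andP[exz ezy]] := common_nbr xy (negbT exy).
by rewrite (walk_of_length2 exz ezy).
Qed.

End GraphDistance.

Lemma det_1D_mulmxC (R : comNzRingType) m k (A : 'M[R]_(m, k)) (B : 'M[R]_(k, m)) :
  \det (1%:M + A *m B) = \det (1%:M + B *m A).
Proof.
have eAB : block_mx 1%:M A 0 1%:M *m block_mx 1%:M (- A) B 1%:M
           = block_mx (1%:M + A *m B) 0 B 1%:M.
  by rewrite mulmx_block !mul1mx !mul0mx !mulmx1 addNr !add0r.
have eBA : block_mx 1%:M 0 (- B) 1%:M *m block_mx 1%:M (- A) B 1%:M
           = block_mx 1%:M (- A) 0 (1%:M + B *m A).
  by rewrite mulmx_block !mul1mx !mul0mx !mulmx1 !addr0 addNr mulNmx mulmxN opprK addrC.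
have := congr1 determinant eAB; have := congr1 determinant eBA.
rewrite !det_mulmx det_ublock det_lblock det_ublock det_lblock !det1 !mulr1 !mul1r.
by move=> <- <-.
Qed.

Lemma det_diagD_mulmx (F : fieldType) n k (d : 'rV[F]_n)
    (A : 'M[F]_(n, k)) (B : 'M[F]_(k, n)) :
  (forall i, d 0 i != 0) ->
  \det (diag_mx d + A *m B) =
    \det (diag_mx d) * \det (1%:M + B *m diag_mx (map_mx GRing.inv d) *m A).
Proof.
move=> d_neq0.
have diag_inv : diag_mx d *m diag_mx (map_mx GRing.inv d) = 1%:M.
  by rewrite mulmx_diag -diag_const_mx; congr diag_mx; apply/rowP => i; rewrite !mxE mulfV.
have -> : diag_mx d + A *m B = diag_mx d *m (1%:M + diag_mx (map_mx GRing.inv d) *m A *m B).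
  by rewrite mulmxDr mulmx1 !mulmxA diag_inv mul1mx.
by rewrite det_mulmx det_1D_mulmxC mulmxA.
Qed.

Lemma det_mx33 (R : comNzRingType) (f : nat -> nat -> R) :
  \det (\matrix_(i < 3, j < 3) f i j) =
    f 0%N 0%N * (f 1%N 1%N * f 2%N 2%N - f 1%N 2%N * f 2%N 1%N)
  - f 0%N 1%N * (f 1%N 0%N * f 2%N 2%N - f 1%N 2%N * f 2%N 0%N)
  + f 0%N 2%N * (f 1%N 0%N * f 2%N 1%N - f 1%N 1%N * f 2%N 0%N).
Proof.
rewrite (expand_det_row _ ord0) !big_ord_recl big_ord0 /cofactor.
rewrite !(expand_det_row _ ord0) !big_ord_recl !big_ord0 /cofactor !det_mx11 !mxE /bump /=.
by rewrite !expr0 !expr1 !exprS !expr0; ring.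
Qed.

Lemma horner_char_poly (R : comNzRingType) n (A : 'M[R]_n) x :
  (char_poly A).[x] = \det (x%:M - A).
Proof.
rewrite /char_poly -horner_evalE -det_map_mx; congr (\det _).
by apply/matrixP => i j; rewrite !mxE rmorphB /= rmorphMn /= !horner_evalE hornerX hornerC.
Qed.

Lemma poly_eq_horner_pos (R : numDomainType) (p q : {poly R}) :
  (forall x, 0 < x -> p.[x] = q.[x]) -> p = q.
Proof.
move=> eq_pq; apply/eqP; rewrite -subr_eq0; apply/eqP.
pose rs := [seq i.+1%:R : R | i <- iota 0 (size (p - q))].
apply: (@roots_geq_poly_eq0 _ _ rs); last by rewrite size_map size_iota.
  by apply/allP => _ /mapP[i _ ->]; rewrite /root !hornerE eq_pq ?subrr ?ltr0Sn.
by rewrite map_inj_uniq ?iota_uniq // => i j /eqP; rewrite eqr_nat => /eqP [].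
Qed.

Definition cubic (R : nzRingType) (c2 c1 c0 : R) : {poly R} :=
  'X ^+ 3 + c2 *: 'X ^+ 2 + c1 *: 'X + c0%:P.

Lemma horner_cubic (R : comNzRingType) (c2 c1 c0 x : R) :
  (cubic c2 c1 c0).[x] = x ^+ 3 + c2 * x ^+ 2 + c1 * x + c0.
Proof. by rewrite /cubic !(hornerD, hornerZ, hornerXn, hornerX, hornerC). Qed.

Lemma size_cubic (R : nzRingType) (c2 c1 c0 : R) : size (cubic c2 c1 c0) = 4%N.
Proof.
rewrite /cubic -!addrA size_polyDl size_polyXn //.
apply: leq_ltn_trans (size_polyD _ _) _; rewrite gtn_max.
apply/andP; split; first by apply: leq_ltn_trans (size_scale_leq _ _) _; rewrite size_polyXn.
apply: leq_ltn_trans (size_polyD _ _) _; rewrite gtn_max size_polyC.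
by rewrite (leq_ltn_trans (size_scale_leq _ _)) ?size_polyX //; case: (c0 != 0).
Qed.

Lemma cubic_monic (R : nzRingType) (c2 c1 c0 : R) : cubic c2 c1 c0 \is monic.
Proof.
by rewrite monicE lead_coefE size_cubic /cubic !coefE /= !mulr0 !addr0.
Qed.

Lemma monic_root_gt (R : rcfType) (p : {poly R}) t :
  p \is monic -> p.[t] < 0 -> exists2 a, t < a & root p a.
Proof.
move=> /monicP p_monic pt_lt0.
have [N p_ge1] : exists N, forall x, N <= x -> lead_coef p <= p.[x].
  by apply: poly_pinfty_gt_lc; rewrite p_monic ltr01.
pose u := Num.max N (t + 1).
have pu_ge1 : 1 <= p.[u] by rewrite -p_monic p_ge1 // le_max lexx.
have t_le_u : t <= u by rewrite le_max lerDl ler01 orbT.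
have sign_change : p.[t] * p.[u] < 0 by rewrite pmulr_llt0 //; lra.
have [a] := poly_ivtoo t_le_u sign_change.
by rewrite in_itv /= => /andP[ta _]; exists a.
Qed.

Lemma cubic_roots_sign_changes (R : rcfType) (c2 c1 c0 t1 t2 t3 t4 : R) :
  t1 <= t2 -> t2 <= t3 -> t3 <= t4 ->
  let q := cubic c2 c1 c0 in
  0 < q.[t1] -> 0 < q.[t2] -> q.[t3] < 0 -> q.[t4] < 0 ->
  exists a b c, [/\ t4 < a, t2 < b < t3, c < t1 &
    q = \prod_(z <- [:: a; b; c]) ('X - z%:P)].
Proof.
move=> t12 t23 t34 q qt1 qt2 qt3 qt4.
have [a t4a ra] := monic_root_gt (cubic_monic c2 c1 c0) qt4.
have sign_change : q.[t2] * q.[t3] < 0 by rewrite pmulr_rlt0.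
have [b] := poly_ivtoo t23 sign_change.
rewrite in_itv /= => b_in rb.
(* A root of q below t1 is the opposite of a root above -t1 of -q(-X). *)
have reflect_q y : (cubic (- c2) c1 (- c0)).[y] = - q.[- y].
  by rewrite !horner_cubic; ring.
have [c' t1c' rc'] : exists2 c', - t1 < c' & root (cubic (- c2) c1 (- c0)) c'.
  by apply: monic_root_gt; rewrite ?cubic_monic // reflect_q opprK oppr_lt0.
have rc : root q (- c') by move: rc'; rewrite /root reflect_q oppr_eq0.
exists a, b, (- c'); split => //; first by rewrite ltrNl.
have /andP[t2b bt3] := b_in.
have dvd_q : \prod_(z <- [:: a; b; - c']) ('X - z%:P) %| q.
  apply: uniq_roots_dvdp; first by rewrite /= ra rb rc.
  rewrite uniq_rootsE /= !inE !negb_or !andbT.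
  by rewrite !gt_eqF //; lra.
have := dvdp_size_eqp dvd_q; rewrite size_prod_XsubC size_cubic eqxx.
by rewrite eqp_monic ?monic_prod_XsubC ?cubic_monic // => /esym/eqP.
Qed.

Lemma sorted_prod_XsubC_eq (R : realFieldType) (s1 s2 : seq R) :
  sorted (fun x y => y <= x) s1 -> sorted (fun x y => y <= x) s2 ->
  \prod_(x <- s1) ('X - x%:P) = \prod_(x <- s2) ('X - x%:P) -> s1 = s2.
Proof.
move=> sorted1 sorted2 eq_prod.
apply: (sorted_eq _ _ sorted1 sorted2 (prod_XsubC_eq eq_prod)).
  by move=> x y z yx zy; apply: le_trans zy yx.
by move=> x y /andP[yx xy]; apply/le_anti; rewrite xy yx.
Qed.

Definition Khn_class (h i : nat) : nat :=
  if i == 0%N then 0%N else if (i < h)%N then 1%N else 2%N.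

Definition class_dist (k l : nat) : nat :=
  if (k == 0%N) && (l == 0%N) then 0%N
  else if [|| k == 0%N, l == 0%N | (k == 1%N) && (l == 1%N)] then 1%N else 2%N.

Lemma Khn_class_lt3 h i : (Khn_class h i < 3)%N.
Proof. by rewrite /Khn_class; case: ifP => //; case: ifP. Qed.

Lemma class_dist_diag k : (k < 3)%N -> class_dist k k = k.
Proof. by case: k => [|[|[|]]]. Qed.

Lemma gdist_Khn n h (i j : 'I_n) : (3 <= h)%N -> (h < n)%N ->
  gdist (Khn_adj n h) i j =
    if i == j then 0%N else class_dist (Khn_class h i) (Khn_class h j).
Proof.
move=> h3 hn; rewrite gdist_diam2 ?card_ord; last 2 first.
- lia.
- move=> ij nadj; have n0 : (0 < n)%N by lia.
  exists (Ordinal n0); move: ij nadj; rewrite /Khn_adj /= -!val_eqE /=.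
  by case: i j => [a Ha] [b Hb] /=; lia.
have [//|] := eqVneq i j; rewrite /Khn_adj /class_dist /Khn_class -!val_eqE /=.
case: i j => [a Ha] [b Hb] /= ab; rewrite ab /=.
have [a0|a0] := eqVneq a 0%N; have [b0|b0] := eqVneq b 0%N;
have [ah|ah] := ltnP a h; have [bh|bh] := ltnP b h => /=; lia.
Qed.

Lemma big_Khn_class (V : Type) (idx : V) (op : Monoid.com_law idx) n h (F : nat -> V) :
  (1 <= h <= n)%N ->
  \big[op/idx]_(i < n) F (Khn_class h i) =
    op (F 0%N) (op (iter (h - 1) (op (F 1%N)) idx) (iter (n - h) (op (F 2%N)) idx)).
Proof.
move=> /andP[h1 hn]; rewrite -(big_mkord xpredT (F \o Khn_class h)).
rewrite (@big_cat_nat _ _ _ 1 0 n) ?(leq_trans h1 hn) //= big_nat1.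
rewrite (@big_cat_nat _ _ _ h 1 n) //= -!big_const_nat; congr (op _ (op _ _)).
  by apply: eq_big_nat => i /andP[i1 ih]; rewrite /= /Khn_class ifN ?ih //; lia.
by apply: eq_big_nat => i /andP[hi _]; rewrite /= /Khn_class !ifN //; lia.
Qed.

Lemma sum_Khn_class (V : nmodType) n h (F : nat -> V) : (1 <= h <= n)%N ->
  \sum_(i < n) F (Khn_class h i) = F 0%N + F 1%N *+ (h - 1) + F 2%N *+ (n - h).
Proof. by move/(big_Khn_class _ F) ->; rewrite -!iter_addr_0 -addrA. Qed.

Lemma prod_Khn_class (R : comPzSemiRingType) n h (F : nat -> R) : (1 <= h <= n)%N ->
  \prod_(i < n) F (Khn_class h i) = F 0%N * F 1%N ^+ (h - 1) * F 2%N ^+ (n - h).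
Proof. by move/(big_Khn_class _ F) ->; rewrite -!iter_mulr_1 -mulrA. Qed.

Lemma sum_ord3_indicator (R : nzRingType) (f : nat -> R) c : (c < 3)%N ->
  \sum_(k < 3) (c == k)%:R * f k = f c.
Proof.
rewrite !big_ord_recl big_ord0 /bump /=.
by case: c => [|[|[|]]] // _; rewrite /= ?mul1r ?mul0r ?add0r ?addr0.
Qed.

Section KhnCharMatrix.
Variables (R : numFieldType) (n h : nat) (x : R).
Hypotheses (h3 : (3 <= h)%N) (hn : (h < n)%N) (x_gt0 : 0 < x).

Let d : 'rV[R]_n := \row_i (x + (Khn_class h i)%:R).
Let U : 'M[R]_(n, 3) := \matrix_(i, k) (Khn_class h i == k)%:R.
Let C : 'M[R]_3 := \matrix_(k, l) - (class_dist k l)%:R.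
Let class_weight (k : nat) : R := (\sum_(i < n) (Khn_class h i == k)%:R) / (x + k%:R).
Let reduced (k l : nat) : R := (k == l)%:R - class_weight k * (class_dist k l)%:R.

Lemma Khn_char_mx_decomp :
  x%:M - dist_matrix R n (Khn_adj n h) = diag_mx d + U *m (C *m U^T).
Proof.
apply/matrixP => i j; rewrite !mxE gdist_Khn //.
have -> : \sum_k U i k * (C *m U^T) k j = C (inord (Khn_class h i)) (inord (Khn_class h j)).
  under eq_bigr => k _ do rewrite !mxE.
  under eq_bigr => k _ do under eq_bigr => l _ do rewrite !mxE mulrC.
  under eq_bigr => k _ do
    rewrite (sum_ord3_indicator (fun l => - (class_dist k l)%:R)) ?Khn_class_lt3 //.
  rewrite (sum_ord3_indicator (fun k => - (class_dist k _)%:R)) ?Khn_class_lt3 //.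
  by rewrite mxE !inordK ?Khn_class_lt3.
rewrite mxE !inordK ?Khn_class_lt3 //.
have [<-|_] := eqVneq i j; last by rewrite !mulr0n.
by rewrite !mulr1n subr0 class_dist_diag ?Khn_class_lt3 // addrK.
Qed.

Lemma Khn_gram :
  U^T *m diag_mx (map_mx GRing.inv d) *m U = diag_mx (\row_(k < 3) class_weight k).
Proof.
apply/matrixP => k l; rewrite -mulmxA mul_diag_mx !mxE /class_weight mulr_suml.
under eq_bigr => i _ do rewrite !mxE.
have [<-|kl] := eqVneq k l; rewrite ?mulr1n ?mulr0n.
  by apply: eq_bigr => i _; case: eqP => [->|_]; rewrite ?mul1r ?mulr1 ?mul0r.
apply: big1 => i _; case: eqP => [ck|]; last by rewrite mul0r.
by rewrite ck (inj_eq val_inj) (negbTE kl) !mulr0.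
Qed.

Lemma det_Khn_char_mx_reduced : \det (x%:M - dist_matrix R n (Khn_adj n h)) =
  x * (x + 1) ^+ (h - 1) * (x + 2) ^+ (n - h) *
  \det (\matrix_(k < 3, l < 3) reduced k l).
Proof.
have d_neq0 i : d 0 i != 0 by rewrite mxE gt_eqF // ltr_pwDl.
rewrite Khn_char_mx_decomp mulmxA det_diagD_mulmx // mulmxA Khn_gram.
congr (_ * _).
  rewrite det_diag; under eq_bigr do rewrite mxE.
  by rewrite (prod_Khn_class (fun c => x + c%:R)) ?addr0 //; lia.
by congr (\det _); apply/matrixP => k l; rewrite mul_diag_mx !mxE mulrN.
Qed.

Lemma det_Khn_char_mx : \det (x%:M - dist_matrix R n (Khn_adj n h)) =
  (x + 1) ^+ (h - 2) * (x + 2) ^+ (n - h - 1) *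
  (x ^+ 3 + (h%:R + 4 - 2 * n%:R) * x ^+ 2
   + (5 - 2 * h%:R - 2 * n%:R * h%:R + 2 * h%:R ^+ 2 - n%:R) * x
   + (- (n%:R * h%:R) + h%:R ^+ 2 - 2 * h%:R + 2)).
Proof.
have class_sum k : \sum_(i < n) (Khn_class h i == k)%:R =
    (0 == k)%:R + (1 == k)%:R * (h%:R - 1) + (2 == k)%:R * (n%:R - h%:R) :> R.
  rewrite (sum_Khn_class (fun c => (c == k)%:R)); last lia.
  by rewrite -(mulr_natr _ (h - 1)) -(mulr_natr _ (n - h)) !natrB //; lia.
have pow_h : (x + 1) ^+ (h - 1) = (x + 1) * (x + 1) ^+ (h - 2).
  by rewrite -exprS; congr (_ ^+ _); lia.
have pow_n : (x + 2) ^+ (n - h) = (x + 2) * (x + 2) ^+ (n - h - 1).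
  by rewrite -exprS; congr (_ ^+ _); lia.
rewrite det_Khn_char_mx_reduced det_mx33 /reduced /class_weight !class_sum pow_h pow_n.
rewrite /class_dist /=.
move: ((x + 1) ^+ (h - 2)) ((x + 2) ^+ (n - h - 1)) => a b.
rewrite !(mul0r, mul1r, mulr0, mulr1, add0r, addr0).
have x1 : x + 1 != 0 by rewrite gt_eqF // ltr_pwDl.
have x2 : x + 2 != 0 by rewrite gt_eqF // ltr_pwDl.
by field; rewrite x1 x2 gt_eqF.
Qed.

End KhnCharMatrix.

Lemma char_poly_Khn (R : numFieldType) n h : (3 <= h)%N -> (h < n)%N ->
  char_poly (dist_matrix R n (Khn_adj n h)) =
    ('X + 1) ^+ (h - 2) * ('X + 2%:P) ^+ (n - h - 1) *
    cubic (h%:R + 4 - 2 * n%:R) (5 - 2 * h%:R - 2 * n%:R * h%:R + 2 * h%:R ^+ 2 - n%:R)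
      (- (n%:R * h%:R) + h%:R ^+ 2 - 2 * h%:R + 2).
Proof.
move=> h3 hn; apply: poly_eq_horner_pos => x x_gt0.
by rewrite horner_char_poly det_Khn_char_mx // hornerM horner_cubic !hornerE.
Qed.

Lemma Khn_cubic_roots (R : rcfType) n h : (3 <= h)%N -> (h < n)%N ->
  exists a b c : R, [/\ 0 < a, -1 < b < -(1/2), c < -2 &
    cubic (h%:R + 4 - 2 * n%:R) (5 - 2 * h%:R - 2 * n%:R * h%:R + 2 * h%:R ^+ 2 - n%:R)
      (- (n%:R * h%:R) + h%:R ^+ 2 - 2 * h%:R + 2) =
    \prod_(z <- [:: a; b; c]) ('X - z%:P)].
Proof.
move=> h3 hn; have hR : 3 <= h%:R :> R by rewrite (ler_nat R 3 h).
have nR : h%:R + 1 <= n%:R :> R by rewrite natr1 ler_nat.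
apply: (@cubic_roots_sign_changes R _ _ _ (-2) (-1) (-(1/2)) 0);
  rewrite ?horner_cubic; nra.
Qed.

Definition Khn_spectrum (R : nzRingType) (k m : nat) (a b c : R) : seq R :=
  a :: b :: nseq k (-1) ++ nseq m (-2) ++ [:: c].

Lemma prod_XsubC_Khn_spectrum (R : comNzRingType) k m (a b c : R) :
  \prod_(z <- Khn_spectrum k m a b c) ('X - z%:P) =
    ('X + 1) ^+ k * ('X + 2%:P) ^+ m * \prod_(z <- [:: a; b; c]) ('X - z%:P).
Proof.
rewrite !big_cons !big_cat /= !big_nseq !big_cons !big_nil -!iter_mulr_1.
by rewrite !polyCN !opprK polyC1 !mulr1; ring.
Qed.

Lemma sorted_Khn_spectrum (R : realDomainType) k m (a b c : R) :
  b <= a -> -1 <= b -> c <= -2 -> sorted (fun x y => y <= x) (Khn_spectrum k m a b c).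
Proof.
move=> ba b1 c2; rewrite (sorted_pairwise ge_trans).
have pairwise_nseq (y : R) j : pairwise (fun x y => y <= x) (nseq j y).
  by elim: j => //= j ->; rewrite all_nseq lexx orbT.
rewrite /Khn_spectrum !pairwise_cons !pairwise_cat !pairwise_nseq /allrel /=.
have [a1 a2 ac b2 bc] : [/\ -1 <= a, -2 <= a, c <= a, -2 <= b & c <= b].
  by split; lra.
have [c1 r21] : c <= -1 /\ -2 <= -1 :> R by split; lra.
rewrite !all_cat !all_nseq /= ba a1 a2 ac b1 b2 bc c2 !orbT /=.
by rewrite all_cat all_nseq /= c1 r21 !orbT.
Qed.

Lemma nth_Khn_spectrum (R : nzRingType) k m (a b c : R) : (0 < k)%N ->
  let L := Khn_spectrum k m a b c in
  [/\ L`_0 = a, L`_1 = b, L`_2 = -1,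
      L`_(k + m + 1) = -1 \/ L`_(k + m + 1) = -2 & L`_(k + m + 2) = c].
Proof.
move=> k_gt0 L; have nthL i : L`_i.+2 = (nseq k (-1) ++ nseq m (-2) ++ [:: c])`_i by [].
have -> : (k + m + 1 = (k + m - 1).+2)%N by lia.
have -> : (k + m + 2 = (k + m).+2)%N by lia.
rewrite !nthL !nth_cat !size_nseq !nth_nseq k_gt0; split => //.
  case: (posnP m) => [->|m_gt0]; [left|right].
    by have -> : (k + 0 - 1 < k)%N by lia.
  have -> : (k + m - 1 < k)%N = false by lia.
  by have -> : (k + m - 1 - k < m)%N by lia.
have -> : (k + m < k)%N = false by lia.
have -> : (k + m - k < m)%N = false by lia.
by have -> : (k + m - k - m = 0)%N by lia.
Qed.

Theorem theorem2p5 (R : rcfType) (n h : nat) (h3 : (3 <= h)%N) (hn : (h <= n - 1)%N) :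
  let D := dist_matrix R n (Khn_adj n h) in
  char_poly D =
    ('X + 1) ^+ (h - 2)%N * ('X + 2%:P) ^+ (n - h - 1)%N *
    ('X ^+ 3 + (h%:R + 4 - 2 * n%:R) *: 'X ^+ 2
     + (5 - 2 * h%:R - 2 * n%:R * h%:R + 2 * h%:R ^+ 2 - n%:R) *: 'X
     + (- (n%:R * h%:R) + h%:R ^+ 2 - 2 * h%:R + 2)%:P)
  /\
  (forall s : seq R,
     size s = n ->
     sorted (fun x y => y <= x) s ->
     char_poly D = \prod_(x <- s) ('X - x%:P) ->
     [/\ 0 < s`_0,
         -1 < s`_1 < -(1/2),
         s`_2 = -1,
         s`_(n - 2)%N = -1 \/ s`_(n - 2)%N = -2
       & s`_(n - 1)%N < -2]).
Proof.
move=> D; have hn' : (h < n)%N by lia.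
have char_D := char_poly_Khn R h3 hn'.
split; first exact: char_D.
move=> s _ sorted_s char_s.
have -> : (n - 2 = (h - 2) + (n - h - 1) + 1)%N by lia.
have -> : (n - 1 = (h - 2) + (n - h - 1) + 2)%N by lia.
have k_gt0 : (0 < h - 2)%N by lia.
have [a [b [c [a_gt0 /andP[b_gt b_lt] c_lt char_q]]]] := Khn_cubic_roots R h3 hn'.
have -> : s = Khn_spectrum (h - 2) (n - h - 1) a b c.
  apply: sorted_prod_XsubC_eq => //; first by apply: sorted_Khn_spectrum; lra.
  by rewrite prod_XsubC_Khn_spectrum -char_s char_D char_q.
have [-> -> -> [->|->] ->] := @nth_Khn_spectrum R (h - 2) (n - h - 1) a b c k_gt0.
  by split; rewrite ?b_gt ?b_lt //; left.
by split; rewrite ?b_gt ?b_lt //; right.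
Qed.
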